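(* With the system $T = D_T\cup A\cup B$ defined below, both $T\setminus B = D_T\cup A$ and $T\setminus D_T = A\cup B$ are terminating.
   Context: A string rewriting system (SRS) $R$ over an alphabet $\Sigma$ is a set of pairs $\ell\to r$ of strings; it induces the rewrite relation $u\ell v\to_R urv$ ($u,v\in\Sigma^*$). $R$ is terminating if there is no infinite sequence $s_0\to_R s_1\to_R\cdots$. Alphabet: $\{0_2,1_2,0_3,1_3,2_3,\lhd,\rhd\}$ (formal symbols). $D_T=\{0_2\rhd\to\rhd,\ 1_2\rhd\to 2_3\rhd\}$; $A=\{0_20_3\to0_30_2,\ 0_21_3\to0_31_2,\ 0_22_3\to1_30_2,\ 1_20_3\to1_31_2,\ 1_21_3\to2_30_2,\ 1_22_3\to2_31_2\}$; $B=\{\lhd0_3\to\lhd1_2,\ \lhd1_3\to\lhd0_20_2,\ \lhd2_3\to\lhd0_21_2\}$; $T=D_T\cup A\cup B$. *)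

From Stdlib Require Import List.
Import ListNotations.

Inductive sym : Type :=
| z2
| o2
| z3
| o3
| t3
| lft  (* left end marker  \lhd *)
| rgt. (* right end marker \rhd *)

Definition word := list sym.

Definition srs := word -> word -> Prop.

Definition rewrite_step (R : srs) (s t : word) : Prop :=
  exists u v l r, R l r /\ s = u ++ l ++ v /\ t = u ++ r ++ v.

Definition terminating (R : srs) : Prop :=
  ~ exists f : nat -> word, forall n, rewrite_step R (f n) (f (S n)).

Definition rules_of (L : list (word * word)) : srs :=
  fun l r => In (l, r) L.

Definition D_T : list (word * word) :=
  [ ([z2; rgt], [rgt]);
    ([o2; rgt], [t3; rgt]) ].

Definition A_rules : list (word * word) :=
  [ ([z2; z3], [z3; z2]);
    ([z2; o3], [z3; o2]);
    ([z2; t3], [o3; z2]);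
    ([o2; z3], [o3; o2]);
    ([o2; o3], [t3; z2]);
    ([o2; t3], [t3; o2]) ].

Definition B_rules : list (word * word) :=
  [ ([lft; z3], [lft; o2]);
    ([lft; o3], [lft; z2; z2]);
    ([lft; t3], [lft; z2; o2]) ].

Definition srs_union (R S : srs) : srs := fun l r => R l r \/ S l r.

Definition T_rules : srs :=
  srs_union (rules_of D_T) (srs_union (rules_of A_rules) (rules_of B_rules)).

Definition srs_minus (R S : srs) : srs := fun l r => R l r /\ ~ S l r.

(* Each symbol a is interpreted as a strictly increasing map [I a : nat -> nat], and a
   word as the composition of the maps of its letters.  Strict monotonicity makes the
   value of a word a context-closed quantity: if every rule l -> r satisfies
   [value r x < value l x] for all x, then every rewrite step u l v -> u r v strictly
   decreases the value of the whole word, so no infinite rewrite sequence exists.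

   The composition can be read right to left (the rightmost letter is applied first)
   or left to right; both readings are developed for an arbitrary interpretation.
   - D_T ∪ A is handled right to left, with 0_2, 1_2 |-> 2x+1 and all else |-> x+1:
     the right marker |> feeds the 2-digits, which outweigh the 3-digits.
   - A ∪ B is handled left to right, with 0_3, 1_3, 2_3 |-> 2x+3 and all else |-> x+1:
     the left marker <| feeds the 3-digits, which outweigh the 2-digits. *)

From Stdlib Require Import List Lia.
Import ListNotations.

Lemma terminating_of_measure (R : srs) (m : word -> nat) :
  (forall s t, rewrite_step R s t -> m t < m s) -> terminating R.
Proof.
  intros Hdec [f Hf].
  assert (Hdescent : forall n, m (f n) + n <= m (f 0)).
  { induction n as [|n IH]; [lia|]. specialize (Hdec _ _ (Hf n)). lia. }
  specialize (Hdescent (S (m (f 0)))). lia.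
Qed.

Definition strictly_increasing (g : nat -> nat) : Prop :=
  forall x y, x < y -> g x < g y.

Section MonotoneInterpretation.

Variable I : sym -> nat -> nat.
Hypothesis I_increasing : forall a, strictly_increasing (I a).

Definition value_rl (w : word) (x : nat) : nat := fold_right I x w.

Definition value_lr (w : word) (x : nat) : nat := fold_left (fun y a => I a y) w x.

Lemma value_rl_app (w1 w2 : word) (x : nat) :
  value_rl (w1 ++ w2) x = value_rl w1 (value_rl w2 x).
Proof. apply fold_right_app. Qed.

Lemma value_lr_app (w1 w2 : word) (x : nat) :
  value_lr (w1 ++ w2) x = value_lr w2 (value_lr w1 x).
Proof. apply fold_left_app. Qed.

Lemma value_rl_increasing (w : word) : strictly_increasing (value_rl w).
Proof.
  induction w as [|a w IH]; intros x y Hxy; simpl; auto.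
  apply I_increasing, IH, Hxy.
Qed.

Lemma value_lr_increasing (w : word) : strictly_increasing (value_lr w).
Proof.
  induction w as [|a w IH]; intros x y Hxy; simpl; auto.
  apply IH, I_increasing, Hxy.
Qed.

(* Compatibility of the rules with the right-to-left reading gives termination:
   the step u l v -> u r v lowers the value of l v, and u is increasing. *)
Lemma terminating_by_value_rl (R : srs) :
  (forall l r, R l r -> forall x, value_rl r x < value_rl l x) -> terminating R.
Proof.
  intros Hcompat.
  apply (terminating_of_measure R (fun w => value_rl w 0)).
  intros s t (u & v & l & r & Hlr & -> & ->).
  rewrite !value_rl_app.
  apply value_rl_increasing, Hcompat, Hlr.
Qed.

(* Symmetrically, compatibility with the left-to-right reading gives termination:
   here the prefix u only provides the argument and the suffix v is increasing. *)
Lemma terminating_by_value_lr (R : srs) :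
  (forall l r, R l r -> forall x, value_lr r x < value_lr l x) -> terminating R.
Proof.
  intros Hcompat.
  apply (terminating_of_measure R (fun w => value_lr w 0)).
  intros s t (u & v & l & r & Hlr & -> & ->).
  rewrite !value_lr_app.
  apply value_lr_increasing, Hcompat, Hlr.
Qed.

End MonotoneInterpretation.

Lemma T_minus_B_incl (l r : word) :
  srs_minus T_rules (rules_of B_rules) l r -> In (l, r) (D_T ++ A_rules).
Proof.
  intros [[HD | [HA | HB]] HnotB]; apply in_or_app; tauto.
Qed.

Lemma T_minus_D_incl (l r : word) :
  srs_minus T_rules (rules_of D_T) l r -> In (l, r) (A_rules ++ B_rules).
Proof.
  intros [[HD | [HA | HB]] HnotD]; apply in_or_app; tauto.
Qed.

Definition interp_DA (a : sym) (x : nat) : nat :=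
  match a with
  | z2 | o2 => 2 * x + 1
  | _ => x + 1
  end.

Definition interp_AB (a : sym) (x : nat) : nat :=
  match a with
  | z3 | o3 | t3 => 2 * x + 3
  | _ => x + 1
  end.

Lemma interp_DA_increasing (a : sym) : strictly_increasing (interp_DA a).
Proof. intros x y Hxy; destruct a; simpl; lia. Qed.

Lemma interp_AB_increasing (a : sym) : strictly_increasing (interp_AB a).
Proof. intros x y Hxy; destruct a; simpl; lia. Qed.

Lemma DA_compatible (l r : word) :
  In (l, r) (D_T ++ A_rules) -> forall x, value_rl interp_DA r x < value_rl interp_DA l x.
Proof.
  simpl; intros Hin x.
  repeat destruct Hin as [Hin | Hin]; try contradiction;
    injection Hin as <- <-; simpl; lia.
Qed.

Lemma AB_compatible (l r : word) :
  In (l, r) (A_rules ++ B_rules) -> forall x, value_lr interp_AB r x < value_lr interp_AB l x.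
Proof.
  simpl; intros Hin x.
  repeat destruct Hin as [Hin | Hin]; try contradiction;
    injection Hin as <- <-; simpl; lia.
Qed.

Theorem mainTheorem4 :
  terminating (srs_minus T_rules (rules_of B_rules)) /\
  terminating (srs_minus T_rules (rules_of D_T)).
Proof.
  split.
  - apply (terminating_by_value_rl interp_DA interp_DA_increasing).
    intros l r Hlr; apply DA_compatible, T_minus_B_incl, Hlr.
  - apply (terminating_by_value_lr interp_AB interp_AB_increasing).
    intros l r Hlr; apply AB_compatible, T_minus_D_incl, Hlr.
Qed.
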